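(* For every $d\ge 2$, $$\mathsf{SR}+\mathsf{AxThExp}\not\models\neg\exists\mathsf{FTLBody}\quad\text{and}\quad\mathsf{SR}+\mathsf{AxThExp}\not\models\exists\mathsf{FTLBody};$$ that is, both $\mathsf{SR}+\mathsf{AxThExp}+\exists\mathsf{FTLBody}$ and $\mathsf{SR}+\mathsf{AxThExp}+\neg\exists\mathsf{FTLBody}$ have models (indeed with quantity part the ordered field of real numbers).
   Context: Language: two-sorted first-order language with sorts $B$ (bodies), $Q$ (quantities), unary $\mathsf{IOb}$ on $B$, binary $\mathsf{Ph}$ on $B$, operations $+,\cdot$ and relation $\le$ on $Q$, and $(d+2)$-ary $\mathsf{W}$ (first two arguments of sort $B$, rest of sort $Q$). $\Sigma\models\varphi$ means $\varphi$ holds in every model of $\Sigma$. $\mathsf{time}(\bar x,\bar y)=x_1-y_1$, $\mathsf{space}^2(\bar x,\bar y)=\sum_{i=2}^d(x_i-y_i)^2$. Write $\mathsf{ev}_m(\bar x)=\mathsf{ev}_k(\bar y)$ for $\forall b[\mathsf{W}(m,b,\bar x)\leftrightarrow\mathsf{W}(k,b,\bar y)]$. $\mathsf{SR}=\mathsf{SPR}^++\mathsf{AxLight}+\mathsf{AxOField}+\mathsf{AxEv}+\mathsf{AxSelf}+\mathsf{AxSymD}$, where: $\mathsf{SPR}^+$: for every formula $\varphi(h,\bar x)$ with at most one free variable $h$ of sort $B$, $\forall m k\bar x[\mathsf{IOb}(m)\land\mathsf{IOb}(k)\to(\varphi(m,\bar x)\leftrightarrow\varphi(k,\bar x))]$.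 $\mathsf{AxLight}$: $\exists m\,c\,[\mathsf{IOb}(m)\land c>0\land\forall\bar x\bar y\,(\exists p b[\mathsf{Ph}(p,b)\land\mathsf{W}(m,p,\bar x)\land\mathsf{W}(m,p,\bar y)]\leftrightarrow \mathsf{space}^2(\bar x,\bar y)=c^2\mathsf{time}(\bar x,\bar y)^2)]$. $\mathsf{AxOField}$: $\langle Q,+,\cdot,\le\rangle$ is an ordered field. $\mathsf{AxEv}$: $\mathsf{IOb}(m)\land\mathsf{IOb}(k)\to\exists\bar y\,\mathsf{ev}_m(\bar x)=\mathsf{ev}_k(\bar y)$. $\mathsf{AxSelf}$: $\mathsf{IOb}(m)\to\forall\bar x[\mathsf{W}(m,m,\bar x)\leftrightarrow x_2=\dots=x_d=0]$. $\mathsf{AxSymD}$: (i) if $\mathsf{IOb}(m),\mathsf{IOb}(k)$, $x_1=y_1$, $x'_1=y'_1$, $\mathsf{ev}_m(\bar x)=\mathsf{ev}_k(\bar x')$ and $\mathsf{ev}_m(\bar y)=\mathsf{ev}_k(\bar y')$, then $\mathsf{space}^2(\bar x,\bar y)=\mathsf{space}^2(\bar x',\bar y')$; (ii) $\mathsf{IOb}(m)\to\exists pb[\mathsf{Ph}(p,b)\land\mathsf{W}(m,p,0,\dots,0)\land\mathsf{W}(m,p,1,1,0,\dots,0)]$. Speed of light: $\mathsf{c}(m,v)$ is defined by $v>0\land\forall\bar x\bar y(\exists pb[\mathsf{Ph}(p,b)\land\mathsf{W}(m,p,\bar x)\land\mathsf{W}(m,p,\bar y)]\to\mathsf{space}^2(\bar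 x,\bar y)=v^2\mathsf{time}(\bar x,\bar y)^2)$; in models of $\mathsf{SR}$ it has a unique witness $\mathsf{c}_m$ for each inertial $m$. $\mathsf{AxThExp}$: $\exists h\,\mathsf{IOb}(h)\land\forall m\bar x\bar y\,(\mathsf{IOb}(m)\land\mathsf{space}^2(\bar x,\bar y)<\mathsf{c}_m^2\mathsf{time}(\bar x,\bar y)^2\to\exists k[\mathsf{IOb}(k)\land\mathsf{W}(m,k,\bar x)\land\mathsf{W}(m,k,\bar y)])$. $\exists\mathsf{FTLBody}$: $\exists m\,b\,\bar x\,\bar y\,[\mathsf{IOb}(m)\land\mathsf{W}(m,b,\bar x)\land\mathsf{W}(m,b,\bar y)\land\mathsf{space}^2(\bar x,\bar y)>\mathsf{c}_m^2\mathsf{time}(\bar x,\bar y)^2]$. *)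

From Stdlib Require Import Reals.
From mathcomp Require Import all_boot.
Set Implicit Arguments.
Unset Strict Implicit.
Unset Printing Implicit Defensive.

Open Scope R_scope.

(* Coordinates: index 0 is time (x_1 in the paper), indices 1..d-1 are  *)
(* space (x_2..x_d in the paper).                                       *)
Record model (d : nat) := Model {
  Body : Type;
  IOb : Body -> Prop;
  Ph : Body -> Body -> Prop;
  W : Body -> Body -> ('I_d -> R) -> Prop
}.

Section SRTheory.
Variable d : nat.
Variable M : model d.

Local Notation B := (Body M).
Local Notation IOb := (@IOb d M).
Local Notation Ph := (@Ph d M).
Local Notation W := (@W d M).

(* the k-th coordinate (0-based) of a point, 0 if k >= d *)
Definition coord (x : 'I_d -> R) (k : nat) : R :=
  match @insub nat (fun k => (k < d)%N) 'I_d k with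
  | Some i => x i
  | None => 0
  end.

Definition time (x y : 'I_d -> R) : R := coord x 0 - coord y 0.
Definition space2 (x y : 'I_d -> R) : R :=
  \big[Rplus/0]_(1 <= k < d) ((coord x k - coord y k) * (coord x k - coord y k)).

Definition mkvec (f : nat -> R) : 'I_d -> R := fun i => f (nat_of_ord i).
Definition origin : 'I_d -> R := mkvec (fun _ => 0).
Definition e11 : 'I_d -> R := mkvec (fun k => if (k <= 1)%N then 1 else 0).

Definition ev_eq (m : B) (x : 'I_d -> R) (k : B) (y : 'I_d -> R) : Prop :=
  forall b, W m b x <-> W k b y.

Definition photon_through (m : B) (x y : 'I_d -> R) : Prop :=
  exists p b, Ph p b /\ W m p x /\ W m p y.

Inductive qterm : Type :=
  | QVar : nat -> qterm
  | QAdd : qterm -> qterm -> qterm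
  | QMul : qterm -> qterm -> qterm.

Inductive form : Type :=
  | FIOb : nat -> form
  | FPh : nat -> nat -> form
  | FW : nat -> nat -> ('I_d -> qterm) -> form
  | FEqB : nat -> nat -> form
  | FEqQ : qterm -> qterm -> form
  | FLe : qterm -> qterm -> form
  | FFalse : form
  | FNot : form -> form
  | FAnd : form -> form -> form
  | FOr : form -> form -> form
  | FImp : form -> form -> form
  | FForallB : nat -> form -> form
  | FExistsB : nat -> form -> form
  | FForallQ : nat -> form -> form
  | FExistsQ : nat -> form -> form.

Fixpoint qeval (sq : nat -> R) (t : qterm) : R :=
  match t with
  | QVar n => sq n
  | QAdd t1 t2 => qeval sq t1 + qeval sq t2
  | QMul t1 t2 => qeval sq t1 * qeval sq t2
  end.

Definition upd {T : Type} (s : nat -> T) (n : nat) (v : T) : nat -> T :=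
  fun k => if (k == n)%N then v else s k.

Fixpoint holds (sb : nat -> B) (sq : nat -> R) (f : form) : Prop :=
  match f with
  | FIOb b => IOb (sb b)
  | FPh b1 b2 => Ph (sb b1) (sb b2)
  | FW b1 b2 ts => W (sb b1) (sb b2) (fun i => qeval sq (ts i))
  | FEqB b1 b2 => sb b1 = sb b2
  | FEqQ t1 t2 => qeval sq t1 = qeval sq t2
  | FLe t1 t2 => qeval sq t1 <= qeval sq t2
  | FFalse => False
  | FNot g => ~ holds sb sq g
  | FAnd g h => holds sb sq g /\ holds sb sq h
  | FOr g h => holds sb sq g \/ holds sb sq h
  | FImp g h => holds sb sq g -> holds sb sq h
  | FForallB v g => forall b : B, holds (upd sb v b) sq g
  | FExistsB v g => exists b : B, holds (upd sb v b) sq g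
  | FForallQ v g => forall r : R, holds sb (upd sq v r) g
  | FExistsQ v g => exists r : R, holds sb (upd sq v r) g
  end.

Fixpoint freeB (f : form) (n : nat) : Prop :=
  match f with
  | FIOb b => b = n
  | FPh b1 b2 => b1 = n \/ b2 = n
  | FW b1 b2 _ => b1 = n \/ b2 = n
  | FEqB b1 b2 => b1 = n \/ b2 = n
  | FEqQ _ _ => False
  | FLe _ _ => False
  | FFalse => False
  | FNot g => freeB g n
  | FAnd g h => freeB g n \/ freeB h n
  | FOr g h => freeB g n \/ freeB h n
  | FImp g h => freeB g n \/ freeB h n
  | FForallB v g => v <> n /\ freeB g n
  | FExistsB v g => v <> n /\ freeB g n
  | FForallQ _ g => freeB g n
  | FExistsQ _ g => freeB g n
  end.

(* SPR+: for every formula phi(h, xbar) whose only free body variable is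
   (at most) h (= body variable 0); xbar are its free quantity variables. *)
Definition SPRplus : Prop :=
  forall phi : form, (forall n, freeB phi n -> n = 0%N) ->
  forall m k : B, IOb m -> IOb k ->
  forall (sb : nat -> B) (sq : nat -> R),
    holds (upd sb 0%N m) sq phi <-> holds (upd sb 0%N k) sq phi.

Definition AxLight : Prop :=
  exists (m : B) (c : R), IOb m /\ 0 < c /\
    forall x y, photon_through m x y <-> space2 x y = c * c * (time x y * time x y).

(* AxOField holds automatically since Q is the real field. *)

Definition AxEv : Prop :=
  forall (m k : B) x, IOb m -> IOb k -> exists y, ev_eq m x k y.

Definition AxSelf : Prop :=
  forall m : B, IOb m -> forall x,
    W m m x <-> (forall i : 'I_d, (0 < i)%N -> x i = 0).

Definition AxSymD : Prop :=
  (forall (m k : B) x y x' y', IOb m -> IOb k ->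
     coord x 0 = coord y 0 -> coord x' 0 = coord y' 0 ->
     ev_eq m x k x' -> ev_eq m y k y' ->
     space2 x y = space2 x' y')
  /\ (forall m : B, IOb m -> photon_through m origin e11).

Definition SR : Prop := SPRplus /\ AxLight /\ AxEv /\ AxSelf /\ AxSymD.

Definition is_c (m : B) (v : R) : Prop :=
  0 < v /\ forall x y, photon_through m x y -> space2 x y = v * v * (time x y * time x y).

(* c_m is the (in models of SR, unique) witness of is_c m *)
Definition AxThExp : Prop :=
  (exists h : B, IOb h) /\
  forall (m : B) x y (v : R), IOb m -> is_c m v ->
    space2 x y < v * v * (time x y * time x y) ->
    exists k : B, IOb k /\ W m k x /\ W m k y.

Definition ExFTLBody : Prop :=
  exists (m b : B) x y (v : R), IOb m /\ is_c m v /\ W m b x /\ W m b y /\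
    space2 x y > v * v * (time x y * time x y).

End SRTheory.

From HB Require Import structures.
From Stdlib Require Import Reals Lra FunctionalExtensionality.
From mathcomp Require Import all_boot.
Set Implicit Arguments.
Unset Strict Implicit.
Unset Printing Implicit Defensive.
Open Scope R_scope.

(* Both models live on Minkowski spacetime R^d.  Their inertial bodies
   (observers) are the interval-preserving bijections k of R^d: observer k
   sees at coordinates x the absolute event k x, and its own worldline is the
   image of the time axis.  The remaining bodies are two-point "pairs" {p, q};
   a pair is a photon when p and q are lightlike separated.  The flag
   [tachyons] decides whether spacelike pairs are allowed to exist: if so they
   are faster-than-light bodies, if not every body has a causal worldline. *)

(* Real addition and multiplication as monoid laws, so that the generic bigop
   lemmas apply to the sums in [space2]. *)
HB.instance Definition _ :=
  Monoid.isComLaw.Build R 0 Rplus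
    (fun x y z => esym (Rplus_assoc x y z)) Rplus_comm Rplus_0_l.
HB.instance Definition _ := Monoid.isMulLaw.Build R 0 Rmult Rmult_0_l Rmult_0_r.
HB.instance Definition _ :=
  Monoid.isAddLaw.Build R Rmult Rplus Rmult_plus_distr_r Rmult_plus_distr_l.

Section Minkowski.
Variable d : nat.
Local Notation point := ('I_d -> R).

Definition lc (a : R) (u : point) (b : R) (w : point) : point :=
  fun i => a * u i + b * w i.

Lemma coord_lc a u b w k : coord (lc a u b w) k = a * coord u k + b * coord w k.
Proof. by rewrite /coord; case: insub => [i|] //=; ring. Qed.

Lemma coord_mkvec (f : nat -> R) k : coord (@mkvec d f) k = if (k < d)%N then f k else 0.
Proof. by rewrite /coord; case: insubP => [i -> <-|/negbTE ->]. Qed.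

Definition mink (u w : point) : R :=
  \big[Rplus/0]_(1 <= k < d) (coord u k * coord w k) - coord u 0 * coord w 0.

Lemma mink_sym u w : mink u w = mink w u.
Proof. by rewrite /mink (eq_bigr _ (fun k _ => Rmult_comm _ _)) Rmult_comm. Qed.

Lemma mink_lcl a u b w z : mink (lc a u b w) z = a * mink u z + b * mink w z.
Proof.
rewrite /mink (eq_bigr (fun k => a * (coord u k * coord z k) + b * (coord w k * coord z k))).
  by rewrite big_split -!big_distrr /= coord_lc; ring.
by move=> k _; rewrite coord_lc; ring.
Qed.

Lemma mink_lcr a u b w z : mink z (lc a u b w) = a * mink z u + b * mink z w.
Proof. by rewrite mink_sym mink_lcl !(mink_sym z). Qed.

Lemma mink_scale a x : mink (lc a x 0 x) (lc a x 0 x) = a * a * mink x x.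
Proof. by rewrite mink_lcl !mink_lcr; ring. Qed.

(* The squared interval between two events; it is negative for timelike,
   zero for lightlike and positive for spacelike separation. *)
Definition interval (x y : point) : R := space2 x y - time x y * time x y.

Lemma interval_mink x y : interval x y = mink (lc 1 x (-1) y) (lc 1 x (-1) y).
Proof.
rewrite /interval /space2 /time /mink !coord_lc.
rewrite (eq_bigr (fun k => coord (lc 1 x (-1) y) k * coord (lc 1 x (-1) y) k)).
  by ring.
by move=> k _; rewrite coord_lc; ring.
Qed.

Lemma interval_expand x y : interval x y = mink x x - 2 * mink x y + mink y y.
Proof. by rewrite interval_mink !mink_lcl !mink_lcr (mink_sym y x); ring. Qed.

Lemma interval_sym x y : interval x y = interval y x.
Proof. by rewrite !interval_expand (mink_sym y x); ring. Qed.

Lemma interval_refl x : interval x x = 0.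
Proof. by rewrite interval_expand; ring. Qed.

Lemma interval_planar x y : (2 <= d)%N ->
  (forall k, (2 <= k)%N -> coord x k = coord y k) ->
  interval x y = (coord x 1 - coord y 1) * (coord x 1 - coord y 1)
                 - (coord x 0 - coord y 0) * (coord x 0 - coord y 0).
Proof.
move=> hd hxy; rewrite /interval /space2 /time big_ltn // big1_seq /=; first by ring.
by move=> k; rewrite /= mem_index_iota => /andP [/hxy -> _]; ring.
Qed.

Lemma interval_origin_e11 : (2 <= d)%N ->
  interval (@origin d) (@e11 d) = 0 /\ time (@origin d) (@e11 d) = -1.
Proof.
move=> hd; have d_pos : (0 < d)%N := ltnW hd.
rewrite interval_planar //; last first.
  by move=> [|[|k]] //= _; rewrite /origin /e11 !coord_mkvec; case: ifP.
by rewrite /time /origin /e11 !coord_mkvec hd d_pos /=; split; ring.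
Qed.

Definition tpoint (t : R) : point := mkvec (fun k => if (k == 0)%N then t else 0).

Lemma tpoint_lc t : tpoint t = lc t (tpoint 1) 0 (tpoint 1).
Proof.
by apply: functional_extensionality => i; rewrite /lc /tpoint /mkvec; case: eqP => _; ring.
Qed.

Lemma mink_tpoint s t : (0 < d)%N -> mink (tpoint s) (tpoint t) = - (s * t).
Proof.
move=> d_pos; rewrite /mink big1_seq /tpoint ?coord_mkvec ?d_pos /=; first by lra.
by move=> [|k]; rewrite mem_index_iota //= => _; rewrite !coord_mkvec; case: ifP => _; ring.
Qed.

Lemma interval_tpoint s t : (0 < d)%N -> interval (tpoint s) (tpoint t) = - ((s - t) * (s - t)).
Proof. by move=> d_pos; rewrite interval_expand !mink_tpoint //; ring. Qed.

Lemma interval_tpoint_e11 : (2 <= d)%N -> interval (tpoint 1) (@e11 d) = 1.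
Proof.
move=> hd; have d_pos : (0 < d)%N := ltnW hd.
rewrite interval_planar //; last first.
  by move=> [|[|k]] //= _; rewrite /tpoint /e11 !coord_mkvec; case: ifP.
by rewrite /tpoint /e11 !coord_mkvec hd d_pos /=; ring.
Qed.

Lemma on_time_axis x : (0 < d)%N ->
  (exists t, x = tpoint t) <-> (forall i : 'I_d, (0 < i)%N -> x i = 0).
Proof.
move=> d_pos; split=> [[t ->] i|x_axis]; first by rewrite /tpoint /mkvec lt0n => /negbTE ->.
exists (x (Ordinal d_pos)); apply: functional_extensionality => i; rewrite /tpoint /mkvec.
case: eqP => [i0|/eqP]; last by rewrite -lt0n; apply: x_axis.
by congr x; apply: val_inj.
Qed.

Definition poincare (f : point -> point) : Prop :=
  (forall x y, interval (f x) (f y) = interval x y) /\ bijective f.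

Lemma poincare_id : poincare id.
Proof. by split=> //; exists id. Qed.

Lemma poincare_comp f g : poincare f -> poincare g -> poincare (g \o f).
Proof.
move=> [f_int f_bij] [g_int g_bij]; split; last exact: bij_comp.
by move=> x y /=; rewrite g_int.
Qed.

Lemma poincare_inv f g : poincare f -> cancel f g -> cancel g f -> poincare g.
Proof. by move=> [f_int _] fK gK; split=> [x y|]; [rewrite -f_int !gK|exists f]. Qed.

Definition shift (P : point) (eps : R) (z : point) : point := lc 1 P eps z.

Lemma poincare_shift P eps : eps * eps = 1 -> poincare (shift P eps).
Proof.
move=> eps2; split.
  move=> x y; rewrite !interval_mink.
  have -> : lc 1 (shift P eps x) (-1) (shift P eps y) = lc eps (lc 1 x (-1) y) 0 (lc 1 x (-1) y).
    by apply: functional_extensionality => i; rewrite /shift /lc; ring.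
  by rewrite mink_scale eps2; ring.
exists (fun z => lc (- eps) P eps z) => z; apply: functional_extensionality => i;
  rewrite /shift /lc.
- by transitivity ((eps * eps) * z i); [ring|rewrite eps2; ring].
- by transitivity (P i + (eps * eps) * (z i - P i)); [ring|rewrite eps2; ring].
Qed.

Definition refl (w z : point) : point := lc 1 z (- (2 * mink z w / mink w w)) w.

Lemma refl_lc w a x b y : refl w (lc a x b y) = lc a (refl w x) b (refl w y).
Proof. by apply: functional_extensionality => i; rewrite /refl mink_lcl /lc /Rdiv; ring. Qed.

Lemma mink_refl w x y : mink w w <> 0 -> mink (refl w x) (refl w y) = mink x y.
Proof. by move=> hw; rewrite /refl !mink_lcl !mink_lcr (mink_sym w y); field. Qed.

Lemma refl_invol w : mink w w <> 0 -> involutive (refl w).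
Proof.
move=> hw z; have hzw : mink (refl w z) w = - mink z w by rewrite /refl mink_lcl; field.
by apply: functional_extensionality => i; rewrite {1}/refl hzw /refl /lc; field.
Qed.

Lemma poincare_refl w : mink w w <> 0 -> poincare (refl w).
Proof.
move=> hw; split; last by exists (refl w); apply: refl_invol.
by move=> x y; rewrite !interval_mink -refl_lc mink_refl.
Qed.

Lemma refl_swap a b : mink a a = mink b b ->
  mink (lc 1 a (-1) b) (lc 1 a (-1) b) <> 0 -> refl (lc 1 a (-1) b) a = b.
Proof.
set w := lc 1 a (-1) b => hab hw.
have hc : 2 * mink a w / mink w w = 1.
  by move: hw; rewrite /w !mink_lcl !mink_lcr (mink_sym b a) hab => hw; field; contradict hw; lra.
by apply: functional_extensionality => i; rewrite /refl hc /w /lc; ring.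
Qed.

(* Every unit timelike vector u is, up to sign, the image of the time direction
   under a reflection; the sign eps is chosen so that the mirror is non-null. *)
Lemma unit_timelike_frame u : (0 < d)%N -> mink u u = -1 ->
  exists eps w, eps * eps = 1 /\ mink w w <> 0 /\ refl w (tpoint 1) = lc eps u 0 u.
Proof.
move=> d_pos hu; set e0 := tpoint 1; have he0 : mink e0 e0 = -1 by rewrite mink_tpoint //; ring.
have [eps [eps2 hw]] : exists eps, eps * eps = 1 /\ mink e0 u <> - eps.
  by case: (Req_dec (mink e0 u) (-1)) => h; [exists (-1)|exists 1]; split=> //; lra.
set b := lc eps u 0 u; have hb : mink b b = -1.
  by rewrite /b mink_scale hu eps2; ring.
(* the mirror e0 - eps u has Minkowski square -2 (1 + eps <e0, u>) *)
have hw' : mink (lc 1 e0 (-1) b) (lc 1 e0 (-1) b) <> 0.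
  by rewrite /b !mink_lcl !mink_lcr he0 hu (mink_sym u e0) => h; apply: hw; nra.
exists eps, (lc 1 e0 (-1) b); do 2!split=> //.
by apply: refl_swap; rewrite ?he0 ?hb.
Qed.

(* Any two timelike separated events lie on the time axis of some observer:
   translate P to the origin and rotate the unit vector from P to R onto the
   time direction. *)
Lemma timelike_axis P R : (0 < d)%N -> interval P R < 0 ->
  exists k, poincare k /\ k (tpoint 0) = P /\ exists s, k (tpoint s) = R.
Proof.
move=> d_pos hPR; have hpos : 0 < - interval P R by lra.
set s := sqrt (- interval P R); have s_pos : 0 < s := sqrt_lt_R0 _ hpos.
have ss : s * s = - interval P R := sqrt_sqrt _ (Rlt_le _ _ hpos).
set u := lc (/ s) R (- / s) P.
have hu : mink u u = -1.
  have -> : u = lc (/ s) (lc 1 R (-1) P) 0 (lc 1 R (-1) P).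
    by apply: functional_extensionality => i; rewrite /u /lc; ring.
  rewrite mink_scale -interval_mink interval_sym.
  by rewrite -[interval P R]Ropp_involutive -ss; field; lra.
have [eps [w [eps2 [hw refl_e0]]]] := unit_timelike_frame d_pos hu.
have on_axis t : (shift P eps \o refl w) (tpoint t) = lc 1 P t u.
  rewrite /= tpoint_lc refl_lc refl_e0; apply: functional_extensionality => i.
  by rewrite /shift /lc; transitivity (P i + (eps * eps) * (t * u i)); [ring|rewrite eps2; ring].
exists (shift P eps \o refl w); split.
  exact: poincare_comp (poincare_refl hw) (poincare_shift P eps2).
split; first by rewrite on_axis; apply: functional_extensionality => i; rewrite /lc; ring.
by exists s; rewrite on_axis; apply: functional_extensionality => i; rewrite /u /lc; field; lra.
Qed.

End Minkowski.

Lemma upd_agree (T : Type) (s s' : nat -> T) v b (P : nat -> Prop) :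
  (forall n, v <> n /\ P n -> s n = s' n) -> forall n, P n -> upd s v b n = upd s' v b n.
Proof. by move=> hs n hn; rewrite /upd; case: eqP => // hnv; apply: hs; split=> // /esym. Qed.

Section Automorphisms.
Variables (d : nat) (M : model d).
Local Notation body := (Body M).

Record automorphism (sigma : body -> body) : Prop := {
  aut_bij : bijective sigma;
  aut_IOb : forall b, IOb (sigma b) <-> IOb b;
  aut_Ph : forall a b, Ph (sigma a) (sigma b) <-> Ph a b;
  aut_W : forall a b x, W (sigma a) (sigma b) x <-> W a b x }.

Lemma holds_agree (f : form d) (sb sb' : nat -> body) sq :
  (forall n, freeB f n -> sb n = sb' n) -> (holds sb sq f <-> holds sb' sq f).
Proof.
elim: f sb sb' sq => /=
  [b|b1 b2|b1 b2 ts|b1 b2|t1 t2|t1 t2||g IHg|g IHg h IHh|g IHg h IHh|g IHg h IHh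
  |v g IH|v g IH|v g IH|v g IH] sb sb' sq agree;
  try by rewrite ?agree; auto.
1-4: by rewrite (IHg sb sb') ?(IHh sb sb') //; auto.
- have agree_v b := upd_agree b agree.
  by split=> hg b; [rewrite -(IH _ _ _ (agree_v b))|rewrite (IH _ _ _ (agree_v b))].
- have agree_v b := upd_agree b agree.
  by split=> -[b hg]; exists b; [rewrite -(IH _ _ _ (agree_v b))|rewrite (IH _ _ _ (agree_v b))].
- by split=> hg r; [rewrite -(IH sb sb')|rewrite (IH sb sb')].
- by split=> -[r hg]; exists r; [rewrite -(IH sb sb')|rewrite (IH sb sb')].
Qed.

Lemma holds_automorphism sigma : automorphism sigma ->
  forall (f : form d) (sb : nat -> body) sq, holds (fun n => sigma (sb n)) sq f <-> holds sb sq f.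
Proof.
move=> [[tau sK tK] s_IOb s_Ph s_W].
have upd_sigma sb v b : upd (fun n => sigma (sb n)) v (sigma b) = (fun n => sigma (upd sb v b n)).
  by apply: functional_extensionality => n; rewrite /upd /=; case: eqP.
elim=> /= [b|b1 b2|b1 b2 ts|b1 b2|t1 t2|t1 t2||g IH|g IHg h IHh|g IHg h IHh|g IHg h IHh
  |v g IH|v g IH|v g IH|v g IH] sb sq; rewrite ?IH ?IHg ?IHh ?s_IOb ?s_Ph ?s_W //.
- by split=> [/(can_inj sK)|->].
- split=> hg b; first by rewrite -IH -upd_sigma.
  by rewrite -(tK b) upd_sigma IH.
- split=> -[b hg]; first by exists (tau b); rewrite -IH -upd_sigma tK.
  by exists (sigma b); rewrite upd_sigma IH.
- by split=> hg r; [rewrite -IH|rewrite IH].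
- by split=> -[r hg]; exists r; [rewrite -IH|rewrite IH].
Qed.

Lemma SPRplus_of_automorphisms :
  (forall m k, IOb m -> IOb k -> exists sigma, automorphism sigma /\ sigma m = k) ->
  SPRplus M.
Proof.
move=> transitive phi phi_free m k hm hk sb sq.
have [sigma [aut <-]] := transitive m k hm hk.
rewrite -(holds_automorphism aut phi (upd sb 0 m)).
by apply: holds_agree => n /phi_free ->.
Qed.

End Automorphisms.

Section Spacetime.
Variables (d : nat) (tachyons : bool).
Hypothesis d_ge2 : (2 <= d)%N.
Local Notation point := ('I_d -> R).

Inductive body : Type := Observer of (point -> point) | Pair of point & point.

(* The absolute events on the worldline of a body.  Spacelike pairs have an
   empty worldline unless tachyons are allowed. *)
Definition on_line (b : body) (P : point) : Prop :=
  match b with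
  | Observer f => poincare f /\ exists t, P = f (tpoint t)
  | Pair p q => (tachyons \/ interval p q <= 0) /\ (P = p \/ P = q)
  end.

Definition inertial (b : body) : Prop := if b is Observer f then poincare f else False.

Definition lightlike (b _ : body) : Prop := if b is Pair p q then interval p q = 0 else False.

Definition sees (m b : body) (x : point) : Prop :=
  if m is Observer g then on_line b (g x) else False.

Definition spacetime : model d := @Model d body inertial lightlike sees.

Lemma photon_through_spacetime m x y : poincare m ->
  @photon_through d spacetime (Observer m) x y <-> interval x y = 0.
Proof.
move=> [m_int _]; split.
- move=> [[f|p q] [b [//= hpq [[_ hx] [_ hy]]]]]; rewrite -m_int.
  by case: hx hy => -> [] ->; rewrite ?interval_refl // interval_sym.
- move=> hxy; exists (Pair (m x) (m y)), (Pair (m x) (m y)) => /=.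
  by rewrite m_int hxy; do !split; auto; right; lra.
Qed.

Lemma light_speed_one m : poincare m -> @is_c d spacetime (Observer m) 1.
Proof. by move=> hm; split=> [|x y /(photon_through_spacetime _ _ hm)]; rewrite /interval; lra. Qed.

(* ... and 1 is its only speed of light (tested on the photon of AxSymD). *)
Lemma light_speed_unique m v :
  poincare m -> @is_c d spacetime (Observer m) v -> v * v = 1.
Proof.
move=> hm [_ hv]; have [light_e11 time_e11] := interval_origin_e11 d_ge2.
have := hv _ _ (proj2 (photon_through_spacetime _ _ hm) light_e11).
by move: light_e11; rewrite /interval time_e11; lra.
Qed.

Lemma spacetime_AxLight : AxLight spacetime.
Proof.
exists (Observer id), 1; split; first exact: poincare_id.
split; first lra.
move=> x y; rewrite photon_through_spacetime; last exact: poincare_id.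
by rewrite /interval; split=> ?; lra.
Qed.

Lemma spacetime_AxEv : AxEv spacetime.
Proof. by move=> [fm|//] [fk|//] x /= _ [_ [h _ hK]]; exists (h (fm x)) => b /=; rewrite hK. Qed.

Lemma spacetime_AxSelf : AxSelf spacetime.
Proof.
move=> [m|//] /= hm x; rewrite -(on_time_axis x (ltnW d_ge2)).
split=> [[_ [t /(bij_inj (proj2 hm)) ->]]|[t ->]]; first by exists t.
by split=> //; exists t.
Qed.

(* If coordinates x of fm and x' of fk describe the same event, they denote
   the same absolute event (test with the pair sitting only at fm x). *)
Lemma sees_same_event fm fk x x' :
  @ev_eq d spacetime (Observer fm) x (Observer fk) x' -> fk x' = fm x.
Proof.
move=> /(_ (Pair (fm x) (fm x))) [/= see_x _].
have on_x : on_line (Pair (fm x) (fm x)) (fm x).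
  by rewrite /= interval_refl; split; [right; lra|left].
by have [_ []] := see_x on_x.
Qed.

(* Distances between simultaneous events agree since all observers preserve
   the interval. *)
Lemma spacetime_AxSymD : AxSymD spacetime.
Proof.
split; last first.
  move=> [m|//] /= hm; apply/photon_through_spacetime => //.
  exact: (proj1 (interval_origin_e11 d_ge2)).
move=> [fm|//] [fk|//] x y x' y' /= [fm_int _] [fk_int _] t_xy t_xy' /sees_same_event ex
  /sees_same_event ey.
have : interval x y = interval x' y' by rewrite -fm_int -(fk_int x' y') ex ey.
by rewrite /interval /time t_xy t_xy'; lra.
Qed.

Lemma spacetime_AxThExp : AxThExp spacetime.
Proof.
split; first by exists (Observer id); exact: poincare_id.
move=> [m|//] x y v /= hm hc; rewrite (light_speed_unique hm hc) => slow.
have : interval (m x) (m y) < 0 by rewrite (proj1 hm) /interval; lra.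
move=> /(timelike_axis (ltnW d_ge2)) [k [hk [kx [s ky]]]].
by exists (Observer k); do !split=> //; [exists 0|exists s].
Qed.

Definition move_body (g : point -> point) (b : body) : body :=
  match b with Observer f => Observer (g \o f) | Pair p q => Pair (g p) (g q) end.

Lemma poincare_compl (g f : point -> point) : poincare g -> poincare (g \o f) <-> poincare f.
Proof.
move=> hg; split=> [hgf|hf]; last exact: poincare_comp hf hg.
have [h gK hK] := proj2 hg.
have -> : f = h \o (g \o f) by apply: functional_extensionality => x /=; rewrite gK.
exact: poincare_comp hgf (poincare_inv hg gK hK).
Qed.

Lemma on_line_move (g : point -> point) b P :
  poincare g -> on_line (move_body g b) (g P) <-> on_line b P.
Proof.
move=> hg; have g_inj := bij_inj (proj2 hg).
case: b => [f|p q] /=; first rewrite poincare_compl //.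
  by split=> -[hf [t e]]; split=> //; exists t; [apply: g_inj|rewrite e].
rewrite (proj1 hg); split=> -[hpq e]; split=> //.
  by case: e => /g_inj ->; auto.
by case: e => ->; auto.
Qed.

Lemma automorphism_move (g : point -> point) :
  poincare g -> @automorphism d spacetime (move_body g).
Proof.
move=> hg; have [h gK hK] := proj2 hg; split.
- exists (move_body h) => -[f|p q] /=; rewrite ?gK ?hK //;
    by congr Observer; apply: functional_extensionality => x /=; rewrite ?gK ?hK.
- by move=> [f|p q] //=; apply: poincare_compl.
- by move=> [f|p q] b //=; rewrite (proj1 hg).
- by move=> [f|p q] b x //=; apply: on_line_move.
Qed.

(* The map fk o fm^-1 moves observer fm to observer fk. *)
Lemma spacetime_SPRplus : SPRplus spacetime.
Proof.
apply: SPRplus_of_automorphisms => -[fm|//] [fk|//] /= hm hk.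
have [h fmK hK] := proj2 hm.
exists (move_body (fk \o h)); split.
  exact/automorphism_move/(poincare_comp (poincare_inv hm fmK hK) hk).
by congr Observer; apply: functional_extensionality => x /=; rewrite fmK.
Qed.

Lemma spacetime_SR : SR spacetime.
Proof.
split; first exact: spacetime_SPRplus.
split; first exact: spacetime_AxLight.
split; first exact: spacetime_AxEv.
split; [exact: spacetime_AxSelf|exact: spacetime_AxSymD].
Qed.

Lemma spacetime_FTL : tachyons -> ExFTLBody spacetime.
Proof.
move=> htachyons; exists (Observer id), (Pair (tpoint 1) (@e11 d)), (tpoint 1), (@e11 d), 1.
split; first exact: poincare_id.
split; first by apply: light_speed_one; exact: poincare_id.
split; first by rewrite /=; split; [left|left].
split; first by rewrite /=; split; [left|right].
by have := interval_tpoint_e11 d_ge2; rewrite /interval; lra.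
Qed.

Lemma causal_worldline b P Q : ~~ tachyons -> on_line b P -> on_line b Q -> interval P Q <= 0.
Proof.
move=> /negbTE notachyons; case: b => [f|p q] /=.
  move=> [[f_int _] [s ->]] [_ [t ->]]; rewrite f_int interval_tpoint ?(ltnW d_ge2) //.
  by have := Rle_0_sqr (s - t); rewrite /Rsqr; lra.
rewrite notachyons => -[[//|hpq] hP] [_ hQ].
by case: hP hQ => -> [] ->; rewrite ?interval_refl ?(interval_sym q p); lra.
Qed.

Lemma spacetime_noFTL : ~~ tachyons -> ~ ExFTLBody spacetime.
Proof.
move=> notachyons [m [b [x [y [v [hm [hc [hx [hy]]]]]]]]].
case: m hm hc hx hy => [m|//] hm hc hx hy.
rewrite (light_speed_unique hm hc) => fast.
by have := causal_worldline notachyons hx hy; rewrite (proj1 hm) /interval; lra.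
Qed.

End Spacetime.

Theorem theorem4p2 (d : nat) (hd : (2 <= d)%N) :
  (exists M : model d, SR M /\ AxThExp M /\ ExFTLBody M) /\
  (exists M : model d, SR M /\ AxThExp M /\ ~ ExFTLBody M).
Proof.
split; [exists (spacetime d true)|exists (spacetime d false)].
- by split; [exact: spacetime_SR|split; [exact: spacetime_AxThExp|exact: spacetime_FTL]].
- by split; [exact: spacetime_SR|split; [exact: spacetime_AxThExp|exact: spacetime_noFTL]].
Qed.
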